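(* For all integers $n \geq k \geq 1$ and $m > 1$ (with $m < n$), $D(\operatorname{SSD}_{n,k,m}) = \Omega(D(\operatorname{SSD}_{n,k}))$ and $R(\operatorname{SSD}_{n,k,m}) = \Omega(R(\operatorname{SSD}_{n,k}))$, where both complexities are taken with respect to the same partition of the input positions between the two players.
   Context: For integers $n \geq k \geq 1$ and an alphabet $\Sigma = \{0,1,\dots,m\}$ with $1 \leq m < n$, define $\operatorname{SSD}_{n,k,m} : \Sigma^n \times \Sigma^k \to \{0,1\}$ by $\operatorname{SSD}_{n,k,m}(x,y) = 1$ if $y$ is a subsequence of $x$ (there exist indices $i_1 < \dots < i_k$ with $x_{i_j} = y_j$ for all $j$) and $0$ otherwise; $\operatorname{SSD}_{n,k} := \operatorname{SSD}_{n,k,1}$ (binary alphabet). In two-party communication, the characters of $(x,y)$ are split between Alice and Bob (the natural partition gives Alice $x$ and Bob $y$), who exchange bits to compute the function. $D(f)$ is the minimum, over deterministic protocols computing $f$, of the maximum number of bits exchanged over all inputs; $R(f)$ is the same for randomized protocols that err with probability at most $1/3$ on every input. *)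

From mathcomp Require Import all_boot all_algebra.
From Stdlib Require Import ClassicalEpsilon.
Set Implicit Arguments. Unset Strict Implicit. Unset Printing Implicit Defensive.
Import GRing.Theory Num.Theory.
Local Open Scope ring_scope.

(* A partition of the positions is  part : 'I_N -> bool                *)
(* (true = the position belongs to Alice, false = to Bob).             *)

(* At an internal node PNode o f l r the
   player o (true = Alice, false = Bob) sends the bit f z; the protocol
   continues in r if the bit is true and in l otherwise.  The history is
   encoded by the position in the tree. *)
Inductive proto (I : Type) : Type :=
| PLeaf of bool
| PNode of bool & (I -> bool) & proto I & proto I.

Arguments PLeaf {I} b.
Arguments PNode {I} o f l r.

Fixpoint peval (I : Type) (p : proto I) (z : I) : bool :=
  match p with
  | PLeaf b => b
  | PNode _ f l r => if f z then peval r z else peval l z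
  end.

(* number of bits exchanged in the worst case = depth of the tree *)
Fixpoint pdepth (I : Type) (p : proto I) : nat :=
  match p with
  | PLeaf _ => 0
  | PNode _ _ l r => (maxn (pdepth l) (pdepth r)).+1
  end.

Fixpoint pvalid (N s : nat) (part : 'I_N -> bool) (p : proto ('I_N -> 'I_s))
  : Prop :=
  match p with
  | PLeaf _ => True
  | PNode o f l r =>
      (forall z z' : 'I_N -> 'I_s,
          (forall i, part i = o -> z i = z' i) -> f z = f z')
      /\ pvalid part l /\ pvalid part r
  end.

Definition D_le (N s : nat) (part : 'I_N -> bool)
    (f : ('I_N -> 'I_s) -> bool) (c : nat) : Prop :=
  exists p, pvalid part p /\ (pdepth p <= c)%N /\ forall z, peval p z = f z.

(* Randomized (public-coin) protocols: a finite probability distribution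
   over valid deterministic protocol trees; error <= 1/3 on every input. *)
Definition R_le (N s : nat) (part : 'I_N -> bool)
    (f : ('I_N -> 'I_s) -> bool) (c : nat) : Prop :=
  exists P : seq (rat * proto ('I_N -> 'I_s)),
    List.Forall (fun q => 0 <= q.1 /\ pvalid part q.2 /\ (pdepth q.2 <= c)%N) P
    /\ \sum_(q <- P) q.1 = 1
    /\ forall z, \sum_(q <- P | peval q.2 z != f z) q.1 <= 1 / 3%:R.

(* The minimum of a property of naturals (0 if it never holds). *)
Definition nat_min (P : nat -> Prop) : nat :=
  match excluded_middle_informative
          (exists d, P d /\ forall c, P c -> (d <= c)%N) with
  | left H => proj1_sig (constructive_indefinite_description _ H)
  | right _ => 0%N
  end.

Definition Dcc N s part f : nat := nat_min (@D_le N s part f).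
Definition Rcc N s part f : nat := nat_min (@R_le N s part f).

(* SSD_{n,k,m} on inputs z : 'I_(n+k) -> 'I_(m.+1) (alphabet {0,...,m}):
   x = positions 0..n-1, y = positions n..n+k-1; SSD = 1 iff y is a
   subsequence of x (mathcomp's subseq). *)
Definition SSD (n k m : nat) (z : 'I_(n + k) -> 'I_m.+1) : bool :=
  subseq [seq val (z (rshift n j)) | j <- enum 'I_k]
         [seq val (z (lshift k i)) | i <- enum 'I_n].

From mathcomp Require Import all_boot all_algebra.
From Stdlib Require Import ClassicalEpsilon FunctionalExtensionality.
Import GRing.Theory Num.Theory.
Set Implicit Arguments. Unset Strict Implicit. Unset Printing Implicit Defensive.
Local Open Scope ring_scope.

(* The binary alphabet embeds into {0,...,m} and SSD commutes with this
   embedding, so composing each bit of a protocol (or of every protocol in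
   a randomized one) for SSD_{n,k,m} with the embedding gives a protocol of
   the same cost for SSD_{n,k}, valid for the same partition.  Hence
   D(SSD_{n,k}) <= D(SSD_{n,k,m}) and R(SSD_{n,k}) <= R(SSD_{n,k,m}).  As
   D and R are defined as minima, with junk value 0 when no protocol
   exists, one also needs that every function has some protocol: the
   owners may announce, for every position i and symbol a, whether z i = a. *)

Definition owned_by N s (part : 'I_N -> bool) (o : bool)
    (f : ('I_N -> 'I_s) -> bool) : Prop :=
  forall z z', (forall i, part i = o -> z i = z' i) -> f z = f z'.

Section Comap.
Variables (I J : Type) (h : J -> I).

Fixpoint pcomap (p : proto I) : proto J :=
  match p with
  | PLeaf b => PLeaf b
  | PNode o f l r => PNode o (fun z => f (h z)) (pcomap l) (pcomap r)
  end.

Lemma peval_comap p z : peval (pcomap p) z = peval p (h z).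
Proof. by elim: p => //= o f l IHl r IHr; rewrite IHl IHr. Qed.

Lemma pdepth_comap p : pdepth (pcomap p) = pdepth p.
Proof. by elim: p => //= o f l IHl r IHr; rewrite IHl IHr. Qed.

End Comap.

Lemma pvalid_comap N s t (part : 'I_N -> bool) (h : 'I_s -> 'I_t) p :
  pvalid part p -> pvalid part (pcomap (fun (z : 'I_N -> 'I_s) i => h (z i)) p).
Proof.
elim: p => //= o f l IHl r IHr [f_owned [/IHl Vl /IHr Vr]]; split => //.
by move=> z z' eq_zz'; apply: f_owned => i /eq_zz' ->.
Qed.

Fixpoint pquery (I : Type) (ts : seq (bool * (I -> bool)))
    (F : seq bool -> bool) : proto I :=
  match ts with
  | [::] => PLeaf (F [::])
  | t :: ts' => PNode t.1 t.2 (pquery ts' (fun bs => F (false :: bs)))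
                              (pquery ts' (fun bs => F (true :: bs)))
  end.

Lemma peval_query I ts F (z : I) :
  peval (pquery ts F) z = F [seq t.2 z | t <- ts].
Proof. by elim: ts F => //= t ts IH F; rewrite !IH; case: (t.2 z). Qed.

Lemma pvalid_query N s (part : 'I_N -> bool)
    (ts : seq (bool * (('I_N -> 'I_s) -> bool))) F :
  List.Forall (fun t => owned_by part t.1 t.2) ts -> pvalid part (pquery ts F).
Proof. by move=> ts_owned; elim: ts_owned F => //= t ts' t_owned _ IH F; split. Qed.

Section TrivialProtocol.
Variables (N s : nat) (part : 'I_N -> bool).

Definition point_queries : seq (bool * (('I_N -> 'I_s) -> bool)) :=
  [seq (part p.1, fun z => z p.1 == p.2) | p <- enum {: 'I_N * 'I_s}].

Definition answers (z : 'I_N -> 'I_s) : seq bool :=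
  [seq q.2 z | q <- point_queries].

Lemma answers_inj z z' : answers z = answers z' -> z =1 z'.
Proof.
rewrite /answers -!map_comp => /eq_in_map eq_ans i; apply/eqP.
by have /= -> := eq_ans (i, z' i) (mem_index_enum _).
Qed.

Lemma D_le_exists (f : ('I_N -> 'I_s) -> bool) : exists c, D_le part f c.
Proof.
pose F bs := [exists g : {ffun 'I_N -> 'I_s}, (answers g == bs) && f g].
exists (pdepth (pquery point_queries F)), (pquery point_queries F); split.
  apply/pvalid_query/List.Forall_map/List.Forall_forall => p _ z z' eq_zz'.
  by rewrite /= eq_zz'.
split=> // z; rewrite peval_query.
apply/existsP/idP => [[g /andP [/eqP ans_g fg]] | fz].
  suff -> : z = g by [].
  by apply/functional_extensionality/answers_inj; rewrite ans_g.
exists (finfun z).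
by rewrite (functional_extensionality _ _ (ffunE z)) fz eqxx.
Qed.

Lemma R_le_of_D_le (f : ('I_N -> 'I_s) -> bool) c :
  D_le part f c -> R_le part f c.
Proof.
move=> [p [Vp [dp ep]]]; exists [:: (1, p)]; split; first by constructor.
by split=> [|z]; rewrite ?big_seq1 // big_cons big_nil /= ep eqxx.
Qed.

End TrivialProtocol.

Section Reduction.
Variables (N s t : nat) (part : 'I_N -> bool) (h : 'I_s -> 'I_t).
Variables (f : ('I_N -> 'I_t) -> bool) (g : ('I_N -> 'I_s) -> bool).
Hypothesis g_reduces : forall z, g z = f (fun i => h (z i)).

Let embed := pcomap (fun (z : 'I_N -> 'I_s) i => h (z i)).

Lemma D_le_reduction c : D_le part f c -> D_le part g c.
Proof.
move=> [p [Vp [dp ep]]]; exists (embed p).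
split; [exact: pvalid_comap | split=> [|z]].
  by rewrite pdepth_comap.
by rewrite peval_comap ep g_reduces.
Qed.

Lemma R_le_reduction c : R_le part f c -> R_le part g c.
Proof.
move=> [P [P_ok [P1 P_err]]]; exists [seq (q.1, embed q.2) | q <- P].
split; [apply/List.Forall_map | split=> [|z]]; rewrite ?big_map //.
  apply: List.Forall_impl P_ok => q [q_ge0 [Vq dq]].
  by split=> //; split; [exact: pvalid_comap | rewrite pdepth_comap].
by rewrite g_reduces; under eq_bigl => q do rewrite peval_comap.
Qed.

End Reduction.

Lemma nat_minP (P : nat -> Prop) : (exists c, P c) ->
  P (nat_min P) /\ forall c, P c -> (nat_min P <= c)%N.
Proof.
move=> exP; have min_exists : exists d, P d /\ forall c, P c -> (d <= c)%N.
  pose Pb c := if excluded_middle_informative (P c) then true else false.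
  have PbP c : reflect (P c) (Pb c).
    by rewrite /Pb; case: excluded_middle_informative; constructor.
  have exPb : exists c, Pb c by case: exP => c /PbP; exists c.
  case: (ex_minnP exPb) => d /PbP Pd d_min.
  by exists d; split=> // c /PbP /d_min.
rewrite /nat_min; case: excluded_middle_informative => [H|[]] //.
by case: (constructive_indefinite_description _ H).
Qed.

Lemma nat_min_le (P Q : nat -> Prop) : (forall c, P c -> Q c) ->
  (exists c, P c) -> (nat_min Q <= nat_min P)%N.
Proof.
move=> PQ exP; have [/PQ Qmin _] := nat_minP exP.
by have [_ ->] := nat_minP (ex_intro _ _ Qmin).
Qed.

Lemma Dcc_reduction N s t (part : 'I_N -> bool) (h : 'I_s -> 'I_t) f g :
  (forall z, g z = f (fun i => h (z i))) -> (Dcc part g <= Dcc part f)%N.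
Proof.
move=> g_reduces; apply: nat_min_le (D_le_exists part f).
exact: D_le_reduction g_reduces.
Qed.

Lemma Rcc_reduction N s t (part : 'I_N -> bool) (h : 'I_s -> 'I_t) f g :
  (forall z, g z = f (fun i => h (z i))) -> (Rcc part g <= Rcc part f)%N.
Proof.
move=> g_reduces; apply: nat_min_le; first exact: R_le_reduction g_reduces.
by have [c Dc] := D_le_exists part f; exists c; apply: R_le_of_D_le.
Qed.

Lemma SSD_widen n k m m' (le_mm' : (m.+1 <= m'.+1)%N) z :
  @SSD n k m z = @SSD n k m' (fun i => widen_ord le_mm' (z i)).
Proof. by rewrite /SSD; congr subseq; apply: eq_map. Qed.

Theorem mainTheorem2 :
  (exists C : rat, 0 < C /\
     forall (n k m : nat) (part : 'I_(n + k) -> bool),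
       (1 <= k)%N -> (k <= n)%N -> (1 < m)%N -> (m < n)%N ->
       C * (Dcc part (@SSD n k 1))%:R <= (Dcc part (@SSD n k m))%:R)
  /\
  (exists C : rat, 0 < C /\
     forall (n k m : nat) (part : 'I_(n + k) -> bool),
       (1 <= k)%N -> (k <= n)%N -> (1 < m)%N -> (m < n)%N ->
       C * (Rcc part (@SSD n k 1))%:R <= (Rcc part (@SSD n k m))%:R).
Proof.
split; exists 1; split=> // n k m part _ _ lt1m _; rewrite mul1r ler_nat.
  exact: Dcc_reduction (SSD_widen (leqW lt1m)).
exact: Rcc_reduction (SSD_widen (leqW lt1m)).
Qed.
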